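(* Assume $s_1=\cdots=s_m=s$ and let $\delta\in\{1,\dots,s^m\}$. Let $v\in\{0,\dots,m-1\}$ be such that $s^v\le\delta\le s^{v+1}$. If $\delta^\perp$ is a positive integer with $\delta^\perp\le\left\lfloor\left(s-\frac{\delta}{s^v}+1\right)s^{m-v-1}\right\rfloor$, then $$\{N\in\Delta(s,\dots,s)\mid D^\perp(N)<\delta^\perp\}\subseteq\{N\in\Delta(s,\dots,s)\mid D(N)\ge\delta\}.$$
   Context: $\Delta(s,\dots,s)=\{X_1^{i_1}\cdots X_m^{i_m}\mid 0\le i_t<s,\ t=1,\dots,m\}$. For $N=X_1^{i_1}\cdots X_m^{i_m}$: $D(N)=\prod_{t=1}^m(s-i_t)$ and $D^\perp(N)=\prod_{t=1}^m(i_t+1)$. *)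

From HB Require Import structures.
From mathcomp Require Import all_boot all_order all_algebra.
Set Implicit Arguments. Unset Strict Implicit. Unset Printing Implicit Defensive.
Import Order.TTheory GRing.Theory Num.Theory.

(* A monomial X_1^{i_1} ... X_m^{i_m} of Delta(s,...,s) is represented by its
   exponent vector (i_t)_{t<m} with 0 <= i_t < s. *)
Definition Delta (m s : nat) := {ffun 'I_m -> 'I_s}.

Definition D (m s : nat) (N : Delta m s) : nat := (\prod_(t < m) (s - N t))%N.

Definition Dperp (m s : nat) (N : Delta m s) : nat := (\prod_(t < m) (N t).+1)%N.

From HB Require Import structures.
From mathcomp Require Import all_boot all_order all_algebra.
From mathcomp Require Import zify ring.
Import Order.TTheory GRing.Theory Num.Theory.

(* Put x_t := i_t + 1, which ranges over [1, s]. The quantity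
   s^v D^perp(N) + s^(m-v-1) D(N) = s^v prod x_t + s^(m-v-1) prod (s + 1 - x_t)
   is affine in each x_t, so it is at least its value at some vertex of the
   box [1, s]^m, namely s^(v+j) + s^(2m-1-v-j); by convexity of k |-> s^k this
   is at least s^m + s^(m-1) = (s + 1) s^(m-1). The hypothesis on delta^perp
   says delta^perp s^v + delta s^(m-v-1) <= (s + 1) s^(m-1), so D^perp(N) <
   delta^perp forces delta s^(m-v-1) < D(N) s^(m-v-1). *)

Lemma leq_min_endpoints_affine {s x : nat} (c d : nat) : (0 < x <= s)%N ->
  (minn (c + s * d) (s * c + d) <= x * c + (s.+1 - x) * d)%N.
Proof.
case/andP=> x0 xs; rewrite geq_min.
by case: (leqP c d) => cd; apply/orP; [right | left]; nia.
Qed.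

Lemma vertex_le_weighted_prods {s : nat} {l : seq nat} (a b : nat) :
  all (fun x => 0 < x <= s)%N l ->
  exists2 j, (j <= size l)%N &
    (a * s ^ j + b * s ^ (size l - j)
       <= a * \prod_(x <- l) x + b * \prod_(x <- l) (s.+1 - x))%N.
Proof.
elim: l a b => [|x l IH] a b /=; first by exists 0%N; rewrite ?big_nil.
case/andP=> xs /IH{}IH; rewrite !big_cons.
have := leq_min_endpoints_affine (a * \prod_(y <- l) y) (b * \prod_(y <- l) (s.+1 - y)) xs.
rewrite geq_min => /orP[] Hx.
- have [j jl Hj] := IH a (b * s); exists j; first exact: leqW.
  rewrite subSn // expnS; nia.
- have [j jl Hj] := IH (a * s) b; exists j.+1 => //.
  rewrite subSS expnS; nia.
Qed.

(* [s^(2d+1) + 1 - s^(d+1) - s^d = (s^(d+1) - 1) (s^d - 1)] is nonnegative. *)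
Lemma expn_balanced_split (s n p q : nat) : (0 < s)%N -> (p + q = n.*2.+1)%N ->
  (s ^ n.+1 + s ^ n <= s ^ p + s ^ q)%N.
Proof.
move=> s0; rewrite -addnn => e; wlog qp : p q e / (q <= p)%N => [W|].
  have [|/ltnW qp] := leqP q p; first exact: W.
  by rewrite [s ^ p + _]addnC; apply: W; rewrite // addnC.
have [d ep] : exists d, p = n.+1 + d by exists (p - n.+1); lia.
have [c en] : exists c, n = d + c by exists (n - d); lia.
have -> : q = c by lia.
rewrite ep en addSn !expnS !expnD.
have X0 : (0 < s ^ d)%N by rewrite expn_gt0 s0.
set X := s ^ d in X0 *.
have : (s * X + X <= s * X * X + 1)%N by nia.
nia.
Qed.

Lemma Delta_gt0 {m s : nat} (N : Delta m s) : (0 < m)%N -> (0 < s)%N.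
Proof. by case: s N => // N m0; case: (N (Ordinal m0)). Qed.

Lemma expn_le_weighted_D_Dperp {m s v : nat} (N : Delta m s) : (v < m)%N ->
  (s ^ m + s ^ m.-1 <= s ^ v * Dperp N + s ^ (m - v - 1) * D N)%N.
Proof.
move=> vm; have s0 := Delta_gt0 N (leq_ltn_trans (leq0n v) vm).
set l := [seq (N t).+1 | t <- enum 'I_m].
have l_range : all (fun x => 0 < x <= s)%N l.
  by apply/allP => _ /mapP[t _ ->]; rewrite /= ltn_ord.
have [j jm Hj] := vertex_le_weighted_prods (s ^ v) (s ^ (m - v - 1)) l_range.
rewrite size_map size_enum_ord in jm Hj.
have -> : Dperp N = \prod_(x <- l) x by rewrite big_map big_enum.
have -> : D N = \prod_(x <- l) (s.+1 - x).
  by rewrite big_map big_enum; apply: eq_bigr => t _; rewrite subSS.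
apply: leq_trans Hj; rewrite -!expnD.
have {1}-> : m = m.-1.+1 by rewrite prednK // (leq_ltn_trans (leq0n v)).
apply: expn_balanced_split => //; rewrite -addnn; lia.
Qed.

Section FloorBound.
Local Open Scope ring_scope.

Lemma floor_bound_nat {m s v delta k : nat} : (0 < s)%N -> (v < m)%N ->
  k%:Z <= Num.floor (((s%:R - delta%:R / (s ^ v)%:R + 1) * (s ^ (m - v - 1))%:R) : rat) ->
  (k * s ^ v + delta * s ^ (m - v - 1) <= s ^ m + s ^ m.-1)%N.
Proof.
move=> s0 vm Hk.
set q := (s%:R - delta%:R / (s ^ v)%:R + 1) * (s ^ (m - v - 1))%:R : rat in Hk.
have k_le_q : k%:R <= q.
  by apply: le_trans (floor_le q); rewrite -[k%:R]/(k%:~R) ler_int.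
have sv_gt0 : 0 < (s ^ v)%:R :> rat by rewrite ltr0n expn_gt0 s0.
have split_m : (s ^ m + s ^ m.-1 = (s + 1) * s ^ v * s ^ (m - v - 1))%N.
  set n := (m - v - 1)%N; have -> : m = (v + n).+1 by rewrite /n; lia.
  by rewrite /= expnS expnD; ring.
have q_sv : q * (s ^ v)%:R
            = (s ^ m + s ^ m.-1)%:R - (delta * s ^ (m - v - 1))%:R :> rat.
  by rewrite split_m /q !natrM natrD; field; rewrite gt_eqF.
rewrite -(ler_nat rat) natrD [(k * _)%:R]natrM -lerBrDr -q_sv.
by rewrite ler_pM2r.
Qed.

End FloorBound.

Theorem mainTheorem3 (m s delta v deltap : nat) :
  (1 <= delta <= s ^ m)%N ->
  (v < m)%N ->
  (s ^ v <= delta <= s ^ v.+1)%N ->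
  (0 < deltap)%N ->
  (deltap%:Z <=
     Num.floor (((s%:R - delta%:R / (s ^ v)%:R + 1) * (s ^ (m - v - 1))%:R) : rat))%R ->
  [set N : Delta m s | (Dperp N < deltap)%N] \subset [set N : Delta m s | (delta <= D N)%N].
Proof.
move=> _ vm _ _ Hfloor; apply/subsetP => N; rewrite !inE => HN.
have s0 := Delta_gt0 N (leq_ltn_trans (leq0n v) vm).
have Hdeltap := floor_bound_nat s0 vm Hfloor.
have HD := expn_le_weighted_D_Dperp N vm.
have Y0 : (0 < s ^ (m - v - 1))%N by rewrite expn_gt0 s0.
suff : (delta * s ^ (m - v - 1) < D N * s ^ (m - v - 1))%N.
  by rewrite ltn_pmul2r // => /ltnW.
nia.
Qed.
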